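(* Let data $(\bm u^{\mathrm d}(t),\bm y^{\mathrm d}(t))_{t=0}^{T-1}$, $T>1$, each belong to $\mathscr{B}_{\mathrm{DF}}$, and let $H\doteq\begin{bmatrix}\bm u^{\mathrm d}(0) & \cdots & \bm u^{\mathrm d}(T-1)\\ \bm y^{\mathrm d}(0) & \cdots & \bm y^{\mathrm d}(T-1)\end{bmatrix}\in\mathbb{R}^{(6n+1)\times T}$ satisfy $\operatorname{rank}H=3n+1$. Fix $p_\bullet,q_\bullet\in\mathbb{R}^n$ and consider the problem $$\min_{p,q,P,Q,\ell,\mathsf v,\mathsf v_0,g}\ \mathbf 1^\top\ell$$ subject to $\mathsf v\ge 0$, $\mathsf v_0=1$, $\begin{bmatrix}u\\ y\end{bmatrix}=Hg$ with $u=(p,q)$, $y=(P,Q,\ell,\mathsf v,\mathsf v_0)$, $g\in\mathbb{R}^T$; $p\le p_\bullet$ and $q\le q_\bullet$ componentwise; and $P_i^2+Q_i^2\le\mathsf v_i\ell_i$ for all $i\in\mathcal N_+$. Then every optimal solution $(p^\star,q^\star,P^\star,Q^\star,\ell^\star,\mathsf v^\star,\mathsf v_0^\star,g^\star)$ satisfies $P^\star\odot P^\star+Q^\star\odot Q^\star=\mathsf v^\star\odot\ell^\star$, i.e. $(P_i^\star)^2+(Q_i^\star)^2=\mathsf v_i^\star\ell_i^\star$ for all $i\in\mathcal N_+$.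
   Context: Network: a tree with nodes $\mathcal N=\{0,1,\dots,n\}$ rooted at the slack node $0$; $\mathcal N_+=\{1,\dots,n\}$. Each $i\in\mathcal N_+$ has a unique parent $\pi(i)\in\mathcal N$, and the edge $(i,\pi(i))$ carries resistance $\mathtt r_i\ge 0$ and reactance $\mathtt x_i\ge0$ with $\mathtt r_i^2+\mathtt x_i^2\neq 0$. Variables: $p,q,P,Q,\ell,\mathsf v\in\mathbb{R}^n$ indexed by $\mathcal N_+$, and $\mathsf v_0\in\mathbb{R}$. The DistFlow equations are, for every $i\in\mathcal N_+$ with $j=\pi(i)$: (1) $P_i=p_i+\sum_{k:\pi(k)=i}(P_k-\mathtt r_k\ell_k)$; (2) $Q_i=q_i+\sum_{k:\pi(k)=i}(Q_k-\mathtt x_k\ell_k)$; (3) $\mathsf v_j=\mathsf v_i-2(\mathtt r_iP_i+\mathtt x_iQ_i)+(\mathtt r_i^2+\mathtt x_i^2)\ell_i$ (with $\mathsf v_j=\mathsf v_0$ when $j=0$); (4) $\ell_i\mathsf v_i=P_i^2+Q_i^2$. Input $u=(p,q)\in\mathbb{R}^{2n}$, output $y=(P,Q,\ell,\mathsf v,\mathsf v_0)\in\mathbb{R}^{4n+1}$ (vertical stacking in this order). $\mathscr{B}_{\mathrm{DF}}$ is the set of all $(u,y)$ satisfying (1)–(4). $\odot$ is the element-wise product and $\mathbf 1$ the all-ones vector. *)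

From HB Require Import structures.
From mathcomp Require Import all_boot all_order all_algebra.
From mathcomp Require Import reals.
Set Implicit Arguments. Unset Strict Implicit. Unset Printing Implicit Defensive.
Import Order.TTheory GRing.Theory Num.Theory.
Local Open Scope ring_scope.

(* Nodes N_+ = {1..n} are represented by 'I_n; the slack node 0 by None.
   par i = Some j : parent of i is the non-slack node j;  par i = None : parent is 0. *)

Definition is_tree (n : nat) (par : 'I_n -> option 'I_n) : Prop :=
  forall i : 'I_n, exists k : nat, iter k (obind par) (Some i) = None.

Definition valid_lines {R : realType} (n : nat) (r x : 'I_n -> R) : Prop :=
  forall i, 0 <= r i /\ 0 <= x i /\ r i ^+ 2 + x i ^+ 2 != 0.

Definition DistFlow {R : realType} (n : nat) (par : 'I_n -> option 'I_n)
  (r x : 'I_n -> R) (p q P Q l v : 'I_n -> R) (v0 : R) : Prop :=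
  forall i : 'I_n,
    [/\ P i = p i + \sum_(k | par k == Some i) (P k - r k * l k),
        Q i = q i + \sum_(k | par k == Some i) (Q k - x k * l k),
        (if par i is Some j then v j else v0)
          = v i - 2 * (r i * P i + x i * Q i) + (r i ^+ 2 + x i ^+ 2) * l i
      & l i * v i = P i ^+ 2 + Q i ^+ 2].

Definition stack {R : realType} (n : nat) (p q P Q l v : 'I_n -> R) (v0 : R)
  : 'cV[R]_(n + (n + (n + (n + (n + (n + 1)))))) :=
  col_mx (\col_i p i) (col_mx (\col_i q i) (col_mx (\col_i P i)
    (col_mx (\col_i Q i) (col_mx (\col_i l i) (col_mx (\col_i v i) v0%:M))))).

Definition data_matrix {R : realType} (n T : nat)
  (pd qd Pd Qd ld vd : 'I_T -> 'I_n -> R) (v0d : 'I_T -> R)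
  : 'M[R]_(n + (n + (n + (n + (n + (n + 1))))), T) :=
  \matrix_(i, t) stack (pd t) (qd t) (Pd t) (Qd t) (ld t) (vd t) (v0d t) i ord0.

Definition feasible {R : realType} (n T : nat)
  (H : 'M[R]_(n + (n + (n + (n + (n + (n + 1))))), T)) (pb qb : 'I_n -> R)
  (p q P Q l v : 'I_n -> R) (v0 : R) (g : 'cV[R]_T) : Prop :=
  (forall i, 0 <= v i) /\
  v0 = 1 /\
  stack p q P Q l v v0 = H *m g /\
  (forall i, p i <= pb i) /\
  (forall i, q i <= qb i) /\
  (forall i, P i ^+ 2 + Q i ^+ 2 <= v i * l i).

Definition objective {R : realType} (n : nat) (l : 'I_n -> R) : R := \sum_i l i.

Definition optimal {R : realType} (n T : nat)
  (H : 'M[R]_(n + (n + (n + (n + (n + (n + 1))))), T)) (pb qb : 'I_n -> R)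
  (p q P Q l v : 'I_n -> R) (v0 : R) (g : 'cV[R]_T) : Prop :=
  feasible H pb qb p q P Q l v v0 g /\
  forall p' q' P' Q' l' v' v0' g',
    feasible H pb qb p' q' P' Q' l' v' v0' g' -> objective l <= objective l'.

From HB Require Import structures.
From mathcomp Require Import all_boot all_order all_algebra.
From mathcomp Require Import reals.
From mathcomp Require Import ring lra.
Import Order.TTheory GRing.Theory Num.Theory.
Local Open Scope ring_scope.
Set Implicit Arguments. Unset Strict Implicit.

(** Equations (1)-(3) of DistFlow are linear, and on a tree their
  solutions are determined by (P, Q, l, v0): (1)-(2) give p, q and (3) gives v
  node by node from the root.  So they form a space of dimension 3n+1, and a data
  matrix of rank 3n+1 spans all of it: [Hg] ranges over every solution of the
  linearised equations.  If the cone constraint were slack at an optimal point on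
  line i, lower l_i by a small e > 0, P_i and Q_i by r_i e/2 and x_i e/2, and the
  injections p, q at both ends of line i by the same amounts.  This keeps (1)-(3),
  leaves v unchanged, only lowers p and q, and keeps the cone constraint for small
  e; so it is feasible with a smaller objective. *)

Section ColumnSpan.
Variables (F : fieldType) (N k T : nat) (S : 'cV[F]_N -> Prop).
Hypothesis S0 : S 0.
Hypothesis S_comb : forall a b w1 w2, S w1 -> S w2 -> S (a *: w1 + b *: w2).

Lemma mulmx_col_closed (M : 'M[F]_(N, T)) (g : 'cV_T) :
  (forall t, S (col t M)) -> S (M *m g).
Proof.
move=> SM; have -> : M *m g = \sum_t g t 0 *: col t M.
  apply/matrixP => i j; rewrite !mxE summxE; apply: eq_bigr => t _.
  by rewrite !mxE (ord1 j) mulrC.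
apply: big_ind => //.
- by move=> w1 w2 S1 S2; rewrite -[w1]scale1r -[w2]scale1r; apply: S_comb.
- by move=> t _; have := S_comb (g t 0) 0 (SM t) (SM t); rewrite scale0r addr0.
Qed.

Variable s : 'I_k -> 'I_N.
Hypothesis S_coord_inj : forall w, S w -> (forall j, w (s j) 0 = 0) -> w = 0.

Lemma col_span_of_rank (H : 'M[F]_(N, T)) :
  (forall t, S (col t H)) -> \rank H = k ->
  forall w, S w -> exists g, H *m g = w.
Proof.
move=> SH rkH.
pose Phi : 'M[F]_(N, k) := \matrix_(i, j) (i == s j)%:R.
have PhiE (u : 'rV_N) j : (u *m Phi) 0 j = u 0 (s j).
  rewrite !mxE (bigD1 (s j)) //= mxE eqxx mulr1 big1 ?addr0 // => i /negbTE ne_i.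
  by rewrite mxE ne_i mulr0.
have S_Phi_inj w : S w -> w^T *m Phi = 0 -> w = 0.
  by move=> Sw wPhi0; apply: S_coord_inj => // j; have := PhiE w^T j; rewrite wPhi0 !mxE.
have rk_HPhi : \rank (H^T *m Phi) = \rank H^T.
  apply/mxrank_injP/eqP/row_matrixP => i; rewrite row0; set u := row i _.
  have /sub_kermxP uPhi0 : (u <= kermx Phi)%MS.
    exact: submx_trans (row_sub _ _) (capmxSr _ _).
  have /submxP [D uD] : (u <= H^T)%MS by apply: submx_trans (row_sub _ _) (capmxSl _ _).
  rewrite -[u]trmxK (S_Phi_inj (u^T)) ?trmx0 ?trmxK //.
  by rewrite uD trmx_mul trmxK; apply: mulmx_col_closed.
have /row_fullP [B BA1] : row_full (H^T *m Phi) by rewrite /row_full rk_HPhi mxrank_tr rkH.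
move=> w Sw; exists (w^T *m Phi *m B)^T; apply/eqP; rewrite -subr_eq0; apply/eqP.
apply: S_Phi_inj.
  by rewrite -scaleN1r -[_ *m _]scale1r; apply: S_comb => //; apply: mulmx_col_closed.
by rewrite raddfB /= trmx_mul trmxK mulmxBl -!mulmxA BA1 mulmx1 subrr.
Qed.

End ColumnSpan.

Notation stack_dim n := (n + (n + (n + (n + (n + (n + 1))))))%N.

Section StackCoordinates.
Variable n : nat.

Definition idx_p (a : 'I_n) : 'I_(stack_dim n) := lshift _ a.
Definition idx_q (a : 'I_n) : 'I_(stack_dim n) := rshift n (lshift _ a).
Definition idx_P (a : 'I_n) : 'I_(stack_dim n) := rshift n (rshift n (lshift _ a)).
Definition idx_Q (a : 'I_n) : 'I_(stack_dim n) :=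
  rshift n (rshift n (rshift n (lshift _ a))).
Definition idx_l (a : 'I_n) : 'I_(stack_dim n) :=
  rshift n (rshift n (rshift n (rshift n (lshift _ a)))).
Definition idx_v (a : 'I_n) : 'I_(stack_dim n) :=
  rshift n (rshift n (rshift n (rshift n (rshift n (lshift _ a))))).
Definition idx_v0 : 'I_(stack_dim n) :=
  rshift n (rshift n (rshift n (rshift n (rshift n (rshift n (ord0 : 'I_1)))))).

Lemma idx_cases (C : 'I_(stack_dim n) -> Prop) :
  (forall a, C (idx_p a)) -> (forall a, C (idx_q a)) -> (forall a, C (idx_P a)) ->
  (forall a, C (idx_Q a)) -> (forall a, C (idx_l a)) -> (forall a, C (idx_v a)) ->
  C idx_v0 -> forall i, C i.
Proof.
move=> Cp Cq CP CQ Cl Cv Cv0 i.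
rewrite -(splitK i); case: (split i) => [a|i1] /=; first exact: Cp.
rewrite -(splitK i1); case: (split i1) => [a|i2] /=; first exact: Cq.
rewrite -(splitK i2); case: (split i2) => [a|i3] /=; first exact: CP.
rewrite -(splitK i3); case: (split i3) => [a|i4] /=; first exact: CQ.
rewrite -(splitK i4); case: (split i4) => [a|i5] /=; first exact: Cl.
rewrite -(splitK i5); case: (split i5) => [a|i6] /=; first exact: Cv.
by rewrite (ord1 i6).
Qed.

Variables (R : realType) (p q P Q l v : 'I_n -> R) (v0 : R).

Lemma stack_p a : stack p q P Q l v v0 (idx_p a) 0 = p a.
Proof. by rewrite /stack /idx_p ?col_mxEd ?col_mxEu !mxE. Qed.

Lemma stack_q a : stack p q P Q l v v0 (idx_q a) 0 = q a.
Proof. by rewrite /stack /idx_q ?col_mxEd ?col_mxEu !mxE. Qed.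

Lemma stack_P a : stack p q P Q l v v0 (idx_P a) 0 = P a.
Proof. by rewrite /stack /idx_P ?col_mxEd ?col_mxEu !mxE. Qed.

Lemma stack_Q a : stack p q P Q l v v0 (idx_Q a) 0 = Q a.
Proof. by rewrite /stack /idx_Q ?col_mxEd ?col_mxEu !mxE. Qed.

Lemma stack_l a : stack p q P Q l v v0 (idx_l a) 0 = l a.
Proof. by rewrite /stack /idx_l ?col_mxEd ?col_mxEu !mxE. Qed.

Lemma stack_v a : stack p q P Q l v v0 (idx_v a) 0 = v a.
Proof. by rewrite /stack /idx_v ?col_mxEd ?col_mxEu !mxE. Qed.

Lemma stack_v0 : stack p q P Q l v v0 idx_v0 0 = v0.
Proof. by rewrite /stack /idx_v0 !col_mxEd !mxE eqxx mulr1n. Qed.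

End StackCoordinates.

Section LinearDistFlow.
Variables (R : comPzRingType) (n : nat) (par : 'I_n -> option 'I_n) (r x : 'I_n -> R).

Definition lin_distflow (p q P Q l v : 'I_n -> R) (v0 : R) : Prop :=
  forall i : 'I_n,
    [/\ P i = p i + \sum_(k | par k == Some i) (P k - r k * l k),
        Q i = q i + \sum_(k | par k == Some i) (Q k - x k * l k) &
        (if par i is Some j then v j else v0)
          = v i - 2 * (r i * P i + x i * Q i) + (r i ^+ 2 + x i ^+ 2) * l i].

Lemma lin_distflow_ext p q P Q l v v0 p' q' P' Q' l' v' v0' :
  p =1 p' -> q =1 q' -> P =1 P' -> Q =1 Q' -> l =1 l' -> v =1 v' -> v0 = v0' ->
  lin_distflow p q P Q l v v0 -> lin_distflow p' q' P' Q' l' v' v0'.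
Proof.
move=> ep eq eP eQ el ev <- LDF i; have [eqP_i eqQ_i eqv_i] := LDF i; split.
- by rewrite -eP -ep eqP_i; congr (_ + _); apply: eq_bigr => k _; rewrite eP el.
- by rewrite -eQ -eq eqQ_i; congr (_ + _); apply: eq_bigr => k _; rewrite eQ el.
- by case: (par i) eqv_i => [j|]; rewrite -!eP -!eQ -!el -!ev.
Qed.

Lemma lin_distflow_comb c d p q P Q l v v0 p' q' P' Q' l' v' v0' :
  lin_distflow p q P Q l v v0 -> lin_distflow p' q' P' Q' l' v' v0' ->
  lin_distflow (fun k => c * p k + d * p' k) (fun k => c * q k + d * q' k)
    (fun k => c * P k + d * P' k) (fun k => c * Q k + d * Q' k)
    (fun k => c * l k + d * l' k) (fun k => c * v k + d * v' k) (c * v0 + d * v0').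
Proof.
move=> LDF LDF' i; have [eP eQ ev] := LDF i; have [eP' eQ' ev'] := LDF' i; split => /=.
- rewrite (eq_bigr (fun k => c * (P k - r k * l k) + d * (P' k - r k * l' k)));
    last by move=> k _; ring.
  by rewrite big_split /= -!mulr_sumr eP eP'; ring.
- rewrite (eq_bigr (fun k => c * (Q k - x k * l k) + d * (Q' k - x k * l' k)));
    last by move=> k _; ring.
  by rewrite big_split /= -!mulr_sumr eQ eQ'; ring.
- by case: (par i) ev ev' => [j|] -> ->; ring.
Qed.

Definition lin_distflow_mx (w : 'cV[R]_(stack_dim n)) : Prop :=
  lin_distflow (fun a => w (idx_p a) 0) (fun a => w (idx_q a) 0)
    (fun a => w (idx_P a) 0) (fun a => w (idx_Q a) 0) (fun a => w (idx_l a) 0)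
    (fun a => w (idx_v a) 0) (w (idx_v0 n) 0).

Lemma lin_distflow_mx0 : lin_distflow_mx 0.
Proof.
move=> i; split; try by rewrite big1 => [|k _]; rewrite !mxE ?mulr0 ?subr0 ?addr0.
by case: (par i) => *; rewrite !mxE; ring.
Qed.

Lemma lin_distflow_mx_comb c d w1 w2 :
  lin_distflow_mx w1 -> lin_distflow_mx w2 -> lin_distflow_mx (c *: w1 + d *: w2).
Proof.
move=> L1 L2; apply: lin_distflow_ext (lin_distflow_comb c d L1 L2);
  by move=> *; rewrite !mxE.
Qed.

(* (3) recovers v from the root down along the tree. *)
Lemma lin_distflow_mx_eq0 w : is_tree par -> lin_distflow_mx w ->
  (forall a, w (idx_P a) 0 = 0) -> (forall a, w (idx_Q a) 0 = 0) ->
  (forall a, w (idx_l a) 0 = 0) -> w (idx_v0 n) 0 = 0 -> w = 0.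
Proof.
move=> tree LDF zP zQ zl zv0.
have zp a : w (idx_p a) 0 = 0.
  have [+ _ _] := LDF a; rewrite zP big1 ?addr0 => [<-//|k _].
  by rewrite zP zl mulr0 subr0.
have zq a : w (idx_q a) 0 = 0.
  have [_ + _] := LDF a; rewrite zQ big1 ?addr0 => [<-//|k _].
  by rewrite zQ zl mulr0 subr0.
have zv a : w (idx_v a) 0 = 0.
  have [m root_a] := tree a; elim: m a root_a => // m IH a; rewrite iterSr /=.
  have [_ _] := LDF a; rewrite zP zQ zl !(mulr0, addr0, subr0).
  by case: (par a) => [b|] <- => [/IH|].
apply/matrixP => i j; rewrite (ord1 j) mxE; move: i; exact: idx_cases.
Qed.

End LinearDistFlow.

Definition flow_coord n (j : 'I_(n + (n + (n + 1)))) : 'I_(stack_dim n) :=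
  match split j with
  | inl a => idx_P a
  | inr j1 => match split j1 with
              | inl a => idx_Q a
              | inr j2 => match split j2 with inl a => idx_l a | inr _ => idx_v0 n end
              end
  end.

Lemma flow_coord_vanish (R : zmodType) n (w : 'cV[R]_(stack_dim n)) :
  (forall j, w (flow_coord j) 0 = 0) ->
  [/\ forall a, w (idx_P a) 0 = 0, forall a, w (idx_Q a) 0 = 0,
      forall a, w (idx_l a) 0 = 0 & w (idx_v0 n) 0 = 0].
Proof.
move=> w0; split=> [a|a|a|].
- by have := w0 (unsplit (inl a)); rewrite /flow_coord unsplitK.
- by have := w0 (unsplit (inr (unsplit (inl a)))); rewrite /flow_coord !unsplitK.
- have := w0 (unsplit (inr (unsplit (inr (unsplit (inl a)))))).
  by rewrite /flow_coord !unsplitK.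
- have := w0 (unsplit (inr (unsplit (inr (unsplit (inr (ord0 : 'I_1))))))).
  by rewrite /flow_coord !unsplitK.
Qed.

Section DataSpan.
Variables (R : realType) (n : nat) (par : 'I_n -> option 'I_n) (r x : 'I_n -> R).

Lemma lin_distflow_stack p q P Q l v v0 :
  lin_distflow par r x p q P Q l v v0 <->
  lin_distflow_mx par r x (stack p q P Q l v v0).
Proof.
split; apply: lin_distflow_ext => [a|a|a|a|a|a|];
  by rewrite ?(stack_p, stack_q, stack_P, stack_Q, stack_l, stack_v, stack_v0).
Qed.

Lemma distflow_lin p q P Q l v v0 :
  DistFlow par r x p q P Q l v v0 -> lin_distflow par r x p q P Q l v v0.
Proof. by move=> DF i; have [? ? ? _] := DF i; split. Qed.

Variables (T : nat) (pd qd Pd Qd ld vd : 'I_T -> 'I_n -> R) (v0d : 'I_T -> R).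

Lemma col_data_matrix t :
  col t (data_matrix pd qd Pd Qd ld vd v0d) =
  stack (pd t) (qd t) (Pd t) (Qd t) (ld t) (vd t) (v0d t).
Proof. by apply/matrixP => i j; rewrite !mxE (ord1 j). Qed.

Hypothesis DF :
  forall t, DistFlow par r x (pd t) (qd t) (Pd t) (Qd t) (ld t) (vd t) (v0d t).

Lemma lin_distflow_col_data t :
  lin_distflow_mx par r x (col t (data_matrix pd qd Pd Qd ld vd v0d)).
Proof. by rewrite col_data_matrix -lin_distflow_stack; apply/distflow_lin/DF. Qed.

Lemma lin_distflow_data_mul g :
  lin_distflow_mx par r x (data_matrix pd qd Pd Qd ld vd v0d *m g).
Proof.
apply: (mulmx_col_closed (lin_distflow_mx0 par r x) (@lin_distflow_mx_comb _ _ par r x)).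
exact: lin_distflow_col_data.
Qed.

Lemma lin_distflow_in_data_span :
  is_tree par -> \rank (data_matrix pd qd Pd Qd ld vd v0d) = (3 * n + 1)%N ->
  forall p q P Q l v v0, lin_distflow par r x p q P Q l v v0 ->
  exists g, data_matrix pd qd Pd Qd ld vd v0d *m g = stack p q P Q l v v0.
Proof.
move=> tree rkH p q P Q l v v0 /lin_distflow_stack.
apply: (col_span_of_rank (lin_distflow_mx0 par r x) (@lin_distflow_mx_comb _ _ par r x)
  (s := @flow_coord n)).
- move=> w Lw /flow_coord_vanish [zP zQ zl zv0]; exact: lin_distflow_mx_eq0.
- exact: lin_distflow_col_data.
- by rewrite rkH !mulSn mul0n addn0 !addnA.
Qed.

End DataSpan.

Definition pulse (R : zmodType) n (o : option 'I_n) (c : R) (k : 'I_n) : R :=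
  if o == Some k then c else 0.

Lemma sum_pulse (R : zmodType) n (B : pred 'I_n) (i : 'I_n) (c : R) :
  \sum_(k | B k) pulse (Some i) c k = if B i then c else 0.
Proof.
rewrite big_mkcond (bigD1 i) //= big1 => [|k /negbTE ki]; rewrite /pulse /=.
  by rewrite eqxx addr0.
by case: (B k) => //; case: eqP => // [[ik]]; rewrite ik eqxx in ki.
Qed.

Section ShiftLoss.
Variables (R : numFieldType) (n : nat) (par : 'I_n -> option 'I_n) (i : 'I_n) (e : R).

Definition shift_flow (c : R) (f : 'I_n -> R) (k : 'I_n) : R := f k - pulse (Some i) c k.

(* A flow change on line i is absorbed by the injections at both of its ends. *)
Definition shift_inj (c : R) (f : 'I_n -> R) (k : 'I_n) : R :=
  f k - pulse (Some i) c k - pulse (par i) c k.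

Lemma balance_shift (y p P l : 'I_n -> R) j :
  P j = p j + \sum_(k | par k == Some j) (P k - y k * l k) ->
  shift_flow (y i * e / 2) P j = shift_inj (y i * e / 2) p j +
    \sum_(k | par k == Some j) (shift_flow (y i * e / 2) P k - y k * shift_flow e l k).
Proof.
move=> balance_j.
rewrite (eq_bigr (fun k => P k - y k * l k + pulse (Some i) (y i * e / 2) k)); last first.
  by move=> k _; rewrite /shift_flow /pulse; case: eqP => [[->]|_]; field.
rewrite big_split /= sum_pulse /shift_flow /shift_inj balance_j /pulse.
by move: (\sum_(_ | _) _) => S; ring.
Qed.

Lemma lin_distflow_shift (r x : 'I_n -> R) p q P Q l v v0 :
  lin_distflow par r x p q P Q l v v0 ->
  lin_distflow par r x (shift_inj (r i * e / 2) p) (shift_inj (x i * e / 2) q)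
    (shift_flow (r i * e / 2) P) (shift_flow (x i * e / 2) Q) (shift_flow e l) v v0.
Proof.
move=> LDF j; have [eP eQ ev] := LDF j; split; try exact: balance_shift.
by rewrite ev /shift_flow /pulse; case: eqP => [[->]|_]; field.
Qed.

End ShiftLoss.

Lemma objective_shift_flow (R : realType) n (i : 'I_n) (c : R) (f : 'I_n -> R) :
  objective (shift_flow i c f) = objective f - c.
Proof. by rewrite /objective sumrB (sum_pulse xpredT). Qed.

Lemma small_quadratic_le (R : realFieldType) (a b d : R) :
  0 <= b -> 0 < d -> exists2 e : R, 0 < e & a * e + b * e ^+ 2 <= d.
Proof.
move=> b_ge0 d_gt0; set C := `|a| + b + d + 1.
have C_gt0 : 0 < C by rewrite /C; have := normr_ge0 a; lra.
exists (d / C); first exact: divr_gt0.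
have eC : d / C * C = d by rewrite divfK ?gt_eqF.
have e_le1 : d / C <= 1 by rewrite ler_pdivrMr // mul1r /C; have := normr_ge0 a; lra.
have e_ge0 : 0 <= d / C by rewrite divr_ge0 // ltW.
have ae : a * (d / C) <= `|a| * (d / C) by rewrite ler_wpM2r // ler_norm.
have be : b * (d / C) ^+ 2 <= b * (d / C) by rewrite ler_wpM2l // expr2 ler_piMr.
rewrite /C in eC; nra.
Qed.

Lemma cone_slack_shift (R : realFieldType) (P Q v l r x : R) :
  P ^+ 2 + Q ^+ 2 < v * l ->
  exists2 e : R, 0 < e & (P - r * e / 2) ^+ 2 + (Q - x * e / 2) ^+ 2 <= v * (l - e).
Proof.
move=> slack.
have z_ge0 : 0 <= (r ^+ 2 + x ^+ 2) / 4 by rewrite divr_ge0 // addr_ge0 ?sqr_ge0.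
have d_gt0 : 0 < v * l - (P ^+ 2 + Q ^+ 2) by lra.
have [e e_gt0 small] := small_quadratic_le (v - r * P - x * Q) z_ge0 d_gt0.
exists e => //.
have -> : (P - r * e / 2) ^+ 2 + (Q - x * e / 2) ^+ 2 =
  P ^+ 2 + Q ^+ 2 - (r * P + x * Q) * e + (r ^+ 2 + x ^+ 2) / 4 * e ^+ 2 by field.
lra.
Qed.

Lemma feasible_shift_loss (R : realType) n T (H : 'M[R]_(stack_dim n, T)) pb qb
    par (r x : 'I_n -> R) p q P Q l v v0 (g g' : 'cV[R]_T) (i : 'I_n) (e : R) :
  valid_lines r x -> 0 <= e -> feasible H pb qb p q P Q l v v0 g ->
  (P i - r i * e / 2) ^+ 2 + (Q i - x i * e / 2) ^+ 2 <= v i * (l i - e) ->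
  H *m g' = stack (shift_inj par i (r i * e / 2) p) (shift_inj par i (x i * e / 2) q)
    (shift_flow i (r i * e / 2) P) (shift_flow i (x i * e / 2) Q) (shift_flow i e l) v v0 ->
  feasible H pb qb (shift_inj par i (r i * e / 2) p) (shift_inj par i (x i * e / 2) q)
    (shift_flow i (r i * e / 2) P) (shift_flow i (x i * e / 2) Q) (shift_flow i e l) v v0 g'.
Proof.
move=> lines e_ge0 [v_ge0 [v0_1 [_ [p_le [q_le cone]]]]] cone_i Hg'.
have [r_ge0 [x_ge0 _]] := lines i.
have re_ge0 : 0 <= r i * e / 2 by rewrite divr_ge0 ?mulr_ge0.
have xe_ge0 : 0 <= x i * e / 2 by rewrite divr_ge0 ?mulr_ge0.
do 3 (split=> //); split; [|split].
- by move=> k; have := p_le k; rewrite /shift_inj /pulse; do 2 case: ifP => _; lra.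
- by move=> k; have := q_le k; rewrite /shift_inj /pulse; do 2 case: ifP => _; lra.
- move=> k; rewrite /shift_flow /pulse; case: eqP => [[<-]|_] //.
  by rewrite !subr0; apply: cone.
Qed.

Theorem lemma3 (R : realType) (n T : nat) (par : 'I_n -> option 'I_n)
  (r x : 'I_n -> R)
  (pd qd Pd Qd ld vd : 'I_T -> 'I_n -> R) (v0d : 'I_T -> R)
  (pb qb : 'I_n -> R) :
  is_tree par ->
  valid_lines r x ->
  (1 < T)%N ->
  (forall t : 'I_T,
     DistFlow par r x (pd t) (qd t) (Pd t) (Qd t) (ld t) (vd t) (v0d t)) ->
  \rank (data_matrix pd qd Pd Qd ld vd v0d) = (3 * n + 1)%N ->
  forall (p q P Q l v : 'I_n -> R) (v0 : R) (g : 'cV[R]_T),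
    optimal (data_matrix pd qd Pd Qd ld vd v0d) pb qb p q P Q l v v0 g ->
    forall i : 'I_n, P i ^+ 2 + Q i ^+ 2 = v i * l i.
Proof.
move=> tree lines _ DF rkH p q P Q l v v0 g [feas opt] i.
have [_ [_ [stack_Hg [_ [_ cone]]]]] := feas.
apply/eqP; rewrite eq_le cone /= leNgt; apply/negP => slack.
have [e e_gt0 cone_e] := cone_slack_shift (r i) (x i) slack.
have LDF : lin_distflow par r x p q P Q l v v0.
  by apply/lin_distflow_stack; rewrite stack_Hg; apply: lin_distflow_data_mul.
have [g' Hg'] := lin_distflow_in_data_span DF tree rkH (lin_distflow_shift i e LDF).
have := opt _ _ _ _ _ _ _ _ (feasible_shift_loss lines (ltW e_gt0) feas cone_e Hg').
by rewrite objective_shift_flow; lra.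
Qed.
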